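(* In the setting described in the context, the graph $K$ has no parallel edges: no pair $\{q,q'\}$ of representatives is added to $F$ on account of two distinct source edges of $E_i$.
   Context: Let $G=(V,E)$ be a connected undirected graph on $n$ vertices with positive integer edge weights $w$ and a unique minimum spanning tree $Z$. Fix an integer $k\ge 2$, $\varepsilon>0$, $t=(2k-1)(1+\varepsilon)$, and let $H$ be the greedy spanner: starting from $H=(V,\emptyset)$, the edges of $E$ are processed in non-decreasing order of weight and $\{u,v\}$ is added to $H$ iff currently $d_H(u,v)>t\cdot w(u,v)$. Order the vertices $v_1,\dots,v_n$ by a preorder traversal of $Z$ and let $L=\sum_{j=2}^n d_Z(v_{j-1},v_j)$. Fix $i\in\{1,\dots,\lceil\log_k n\rceil\}$, set $a=k^{i-1}L/n$, and let $E_i=\{e\in E(H)\setminus E(Z): a<w(e)\le ka\}$. View $Z$ as a metric tree (each edge of weight $x$ is a segment of length $x$) and let $d_Z$ denote distance in it. Let $P=(p_0,\dots,p_L)$ be a path with unit-length edges, where $v_1=p_0$ and $v_j=p_{\ell_j}$ with $\ell_1=0$, $\ell_j=\ell_{j-1}+d_Z(v_{j-1},v_j)$; each point $p_h$ with $\ell_{j-1}\le h\le \ell_j$ is identified with the point of $Z$ on the $Z$-path from $v_{j-1}$ to $v_j$ at distance $h-\ell_{j-1}$ from $v_{j-1}$ (Steiner points subdividing edges of $Z\subseteq H$). Set $s=8L/(\varepsilon a)$, assumed (by scaling) to be such that $s$ and $L/s=\varepsilon a/8$ are integers. For $j\in[s]$ the interval $I_j$ is $\{p_{(j-1)L/s},\dots,p_{jL/s}\}$,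 and $r_j$ is an arbitrarily chosen interior point of $I_j$; $R=\{r_1,\dots,r_s\}$. For an integer $b\ge 0$, $N_b(j)=\{r_h: h\in[s], |j-h|\le b\}$. The multigraph $K=(R,F)$ is defined as follows: for each $e=\{u,v\}\in E_i$ with $u\in I_h$, $v\in I_j$, let $b=\lfloor w(e)/a\rfloor$ and let $M$ be an arbitrary maximal matching between $N_b(h)$ and $N_b(j)$; all edges of $M$ are added to $F$, and for each $\{q,q'\}\in M$ with $q\in N_b(h)$, $q'\in N_b(j)$, the edge $\{u,v\}$ is called its source, written $S(q,q')=(u,v)$. *)

From mathcomp Require Import all_boot all_order all_algebra.
Set Implicit Arguments. Unset Strict Implicit. Unset Printing Implicit Defensive.
Import Order.TTheory GRing.Theory Num.Theory.

Section Graphs.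
Variable V : finType.
(* An (undirected) edge is a 2-element set of vertices; weights on edges. *)
Variable wt : {set V} -> nat.

Definition walk (F : {set {set V}}) (x : V) (s : seq V) : bool :=
  path (fun a b => [set a; b] \in F) x s.

Definition wsum (x : V) (s : seq V) : nat :=
  \sum_(p <- zip (x :: s) s) wt [set p.1; p.2].

Definition simple_graph (E : {set {set V}}) : Prop :=
  forall e, e \in E -> #|e| = 2.

Definition connected (F : {set {set V}}) : Prop :=
  forall x y, exists s, walk F x s /\ last x s = y.

(* weighted distance d_F(x,y) > c, where d_F is the minimum weight of a
   walk in F from x to y (+oo if there is none) *)
Definition dist_gt {R : numDomainType} (F : {set {set V}}) (x y : V) (c : R) : Prop :=
  forall s, walk F x s -> last x s = y -> (c < (wsum x s)%:R)%R.

Definition spanning_tree (E T : {set {set V}}) : Prop :=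
  T \subset E /\ connected T /\ #|T| = #|V|.-1.

Definition tweight (T : {set {set V}}) : nat := \sum_(e in T) wt e.

Definition unique_MST (E Z : {set {set V}}) : Prop :=
  spanning_tree E Z /\
  forall T, spanning_tree E T -> T != Z -> tweight Z < tweight T.

(* H is the output of the greedy t-spanner algorithm when the edges of E are
   processed in the order sq (a non-decreasing-by-weight enumeration of E):
   the k-th edge {x,y} is added iff d_{H_k}(x,y) > t * w(x,y), where H_k is
   the set of edges added before it. *)
Definition greedy_spanner {R : numDomainType} (t : R) (E : {set {set V}})
    (sq : seq {set V}) (H : {set {set V}}) : Prop :=
  [/\ perm_eq sq (enum E), sorted (fun e f => wt e <= wt f) sq,
      H \subset E &
      forall k, k < size sq ->
        (nth set0 sq k \in H <->
         forall x y, nth set0 sq k = [set x; y] ->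
           dist_gt [set f in H | index f sq < k] x y (t * (wt (nth set0 sq k))%:R)%R)].

Definition tree_dist (Z : {set {set V}}) (a b : V) (d : nat) : Prop :=
  exists s, [/\ walk Z a s, last a s = b, uniq (a :: s) & wsum a s = d].

Definition point_on_path (Z : {set {set V}}) (a b u : V) (delta : nat) : Prop :=
  exists s1 s2, [/\ walk Z a s1 /\ last a s1 = u, walk Z u s2 /\ last u s2 = b,
                    uniq (a :: s1 ++ s2) & wsum a s1 = delta].

Definition descendant (Z : {set {set V}}) (r x y : V) : Prop :=
  exists s, [/\ walk Z r s, last r s = y, uniq (r :: s) & x \in r :: s].

(* vs is a preorder traversal of the tree Z (rooted at its first vertex):
   a listing of all vertices in which, for every vertex x, the vertices of the
   subtree of x form a contiguous block starting at x. *)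
Definition preorder (Z : {set {set V}}) (vs : seq V) : Prop :=
  [/\ uniq vs, size vs = #|V| &
      forall r, head r vs = r ->
      forall x, exists c, forall j, j < size vs ->
        (descendant Z r x (nth x vs j) <->
         index x vs <= j < index x vs + c)].

(* the path P: vertex u is identified with the point p_x of P *)
Definition on_P (Z : {set {set V}}) (vs : seq V) (ell : nat -> nat) (u : V) (x : nat) : Prop :=
  exists j, [/\ j.+1 < size vs, ell j <= x <= ell j.+1 &
             point_on_path Z (nth u vs j) (nth u vs j.+1) u (x - ell j)].

(* u lies in the interval I_h = {p_{(h-1)m}, ..., p_{hm}}, where m = L/s *)
Definition in_I (Z : {set {set V}}) (vs : seq V) (ell : nat -> nat) (m h : nat) (u : V) : Prop :=
  exists x, (h.-1 * m <= x <= h * m) /\ on_P Z vs ell u x.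
End Graphs.

(* N_b(j), representatives identified with their indices 1..s *)
Definition Nb (s : nat) (b : int) (j : nat) : pred nat :=
  fun h => (1 <= h <= s) && (`|(h%:Z - j%:Z)%R| <= b)%R.

Definition matching (A B : pred nat) (M : seq (nat * nat)) : Prop :=
  [/\ uniq M,
      forall p, p \in M -> [/\ A p.1, B p.2 & p.1 != p.2] &
      forall p p', p \in M -> p' \in M -> p != p' ->
        [/\ p.1 != p'.1, p.1 != p'.2, p.2 != p'.1 & p.2 != p'.2]].

Definition maximal_matching (A B : pred nat) (M : seq (nat * nat)) : Prop :=
  matching A B M /\
  forall x y, A x -> B y -> x != y ->
    exists2 p, p \in M & [|| x == p.1, x == p.2, y == p.1 | y == p.2].

(* Let e = {u, v} and e' = {u', v'} be edges of E_i, e considered first by the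
   greedy algorithm, and suppose their matchings share a pair (q, q').  Then the
   interval indices of u and u' (and of v and v') differ by at most b + b', so
   u' is within (b + b' + 1) L/s of u in Z, and v within that of v'.  The walk
   u' ~> u -> v ~> v' thus weighs at most 3 (1 + eps) w(e') <= t w(e').  Its tree
   edges that the greedy algorithm had not yet considered when testing e' can be
   cut out one at a time: by cut optimality of the unique MST, no earlier edge
   crosses their cut.  What remains is a walk in the partial spanner of weight
   at most t w(e'), so e' would not have been added. *)

From mathcomp Require Import all_boot all_order all_algebra.
From mathcomp Require Import zify ring lra.
Import Order.TTheory GRing.Theory Num.Theory IntDist.
Set Implicit Arguments. Unset Strict Implicit. Unset Printing Implicit Defensive.

Lemma eq_set2 (T : finType) (a b c d : T) :
  [set a; b] = [set c; d] -> (a = c /\ b = d) \/ (a = d /\ b = c).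
Proof.
move=> e.
have ha : a \in [set c; d] by rewrite -e !inE eqxx.
have hb : b \in [set c; d] by rewrite -e !inE eqxx orbT.
have hc : c \in [set a; b] by rewrite e !inE eqxx.
have hd : d \in [set a; b] by rewrite e !inE eqxx orbT.
move: ha hb hc hd; rewrite !inE => /orP[]/eqP ha /orP[]/eqP hb /orP[]/eqP hc /orP[]/eqP hd;
  subst; auto.
Qed.

Section Walks.
Variables (V : finType) (w : {set V} -> nat).
Implicit Types (F G : {set {set V}}) (x y : V) (s : seq V).

Definition walk_edges x s : seq {set V} := [seq [set p.1; p.2] | p <- zip (x :: s) s].

Lemma walk_edges_cons x y s : walk_edges x (y :: s) = [set x; y] :: walk_edges y s.
Proof. by []. Qed.

Lemma walk_edges_cat x s1 s2 :
  walk_edges x (s1 ++ s2) = walk_edges x s1 ++ walk_edges (last x s1) s2.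
Proof. by elim: s1 x => [|y s1 IH] x //=; rewrite !walk_edges_cons IH. Qed.

Lemma walk_edges_rcons x s y :
  walk_edges x (rcons s y) = rcons (walk_edges x s) [set last x s; y].
Proof. by rewrite -cats1 walk_edges_cat cats1. Qed.

Lemma walkE F x s : walk F x s = all [in F] (walk_edges x s).
Proof. by elim: s x => [|y s IH] x //=; rewrite -IH. Qed.

Lemma walk_cons F x y s : walk F x (y :: s) = ([set x; y] \in F) && walk F y s.
Proof. by []. Qed.

Lemma walk_cat F x s1 s2 : walk F x (s1 ++ s2) = walk F x s1 && walk F (last x s1) s2.
Proof. exact: cat_path. Qed.

Lemma walk_widen F G x s : walk F x s ->
  (forall e, e \in walk_edges x s -> e \in F -> e \in G) -> walk G x s.
Proof. by rewrite !walkE => /allP FW FG; apply/allP => e es; exact: FG _ es (FW _ es). Qed.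

Lemma wsumE x s : wsum w x s = \sum_(e <- walk_edges x s) w e.
Proof. by rewrite /wsum /walk_edges big_map. Qed.

Lemma wsum_nil x : wsum w x [::] = 0.
Proof. by rewrite wsumE big_nil. Qed.

Lemma wsum_cons x y s : wsum w x (y :: s) = w [set x; y] + wsum w y s.
Proof. by rewrite !wsumE walk_edges_cons big_cons. Qed.

Lemma wsum_cat x s1 s2 : wsum w x (s1 ++ s2) = wsum w x s1 + wsum w (last x s1) s2.
Proof. by rewrite !wsumE walk_edges_cat big_cat. Qed.

Lemma walk_rev F x s : walk F x s ->
  exists s', [/\ walk F (last x s) s', last (last x s) s' = x,
                 wsum w (last x s) s' = wsum w x s & walk_edges (last x s) s' =i walk_edges x s].
Proof.
elim: s x => [|y s IH] x /=; first by exists [::].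
case/andP=> xy /IH [s' [ws' ls' wss' es']].
exists (rcons s' x); split.
- by rewrite /walk rcons_path; apply/andP; split; [exact: ws' | rewrite ls' setUC].
- by rewrite last_rcons.
- by rewrite -cats1 wsum_cat !wsum_cons wsum_nil ls' wss' addn0 addnC setUC.
- by move=> e; rewrite walk_edges_rcons ls' mem_rcons walk_edges_cons !inE es' setUC.
Qed.

Lemma walk_edges_split_first f x s : f \in walk_edges x s ->
  exists s1 z s2,
    [/\ s = s1 ++ z :: s2, [set last x s1; z] = f & f \notin walk_edges x s1].
Proof.
elim: s x => [|y s IH] x //; rewrite walk_edges_cons inE.
have [-> _|fxy /= fs] := eqVneq f [set x; y]; first by exists [::], y, s.
have [s1 [z [s2 [-> fz fs1]]]] := IH y fs.
by exists (y :: s1), z, s2; rewrite walk_edges_cons inE negb_or fxy.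
Qed.

Lemma walk_edges_split_last f x s : f \in walk_edges x s ->
  exists s1 z s2,
    [/\ s = s1 ++ z :: s2, [set last x s1; z] = f & f \notin walk_edges z s2].
Proof.
elim: s x => [|y s IH] x //; rewrite walk_edges_cons inE.
have [fs _|fs /orP [/eqP fxy|//]] := boolP (f \in walk_edges y s).
  by have [s1 [z [s2 [-> fz fs2]]]] := IH y fs; exists (y :: s1), z, s2.
by exists [::], y, s; split; rewrite -?fxy.
Qed.

Lemma walk_edges_notin x y z s : x \notin z :: s -> [set x; y] \notin walk_edges z s.
Proof.
elim: s z => [|z' s IH] z //; rewrite walk_edges_cons in_cons negb_or => /andP [xz xs].
rewrite in_cons negb_or IH // andbT; apply/eqP => /eq_set2 [[exz _]|[exz _]].
- by rewrite exz eqxx in xz.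
- by rewrite exz mem_head in xs.
Qed.

Definition monochrome (col : pred V) (e : {set V}) :=
  forall a b, e = [set a; b] -> col a = col b.

Lemma walk_monochrome_last (col : pred V) x s :
  (forall e, e \in walk_edges x s -> monochrome col e) -> col (last x s) = col x.
Proof.
elim: s x => [|y s IH] x //= mono.
rewrite IH; first exact: (esym (mono _ (mem_head _ _) x y erefl)).
by move=> e es; apply: mono; rewrite walk_edges_cons inE es orbT.
Qed.

(* The colour changes only across [set c; d] and both ends agree, so the walk
   crosses it at least twice; drop the segment from the first to the last
   crossing. *)
Lemma walk_cut_shortcut F (col : pred V) c d x s :
  col c != col d -> walk F x s -> [set c; d] \in walk_edges x s ->
  (forall e, e \in walk_edges x s -> e != [set c; d] -> monochrome col e) ->
  col (last x s) = col x ->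
  exists s', [/\ walk F x s', last x s' = last x s & wsum w x s' + w [set c; d] <= wsum w x s].
Proof.
move=> col_cd ws cds mono ends.
have same_side p q : p \in [set c; d] -> q \in [set c; d] -> col p = col q -> p = q.
  rewrite !inE => /orP [] /eqP -> /orP [] /eqP -> // col_eq.
  - by rewrite col_eq eqxx in col_cd.
  - by rewrite col_eq eqxx in col_cd.
have [s1 [z [s2 [sE pz s1_cd]]]] := walk_edges_split_first cds; subst s.
move: ws ends mono; rewrite walk_cat walk_cons last_cat /= walk_edges_cat walk_edges_cons.
move=> /and3P [ws1 _ ws2] ends mono; set p := last x s1 in pz ws2 *.
have p_cd : p \in [set c; d] by rewrite -pz !inE eqxx.
have z_cd : z \in [set c; d] by rewrite -pz !inE eqxx orbT.
have col_p : col p = col x.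
  apply: walk_monochrome_last => e es; apply: mono; first by rewrite mem_cat es.
  by apply: contraNneq s1_cd => <-.
have col_pz : col p != col z.
  apply: contraTneq col_cd => /(same_side _ _ p_cd z_cd) ep.
  by case: (eq_set2 pz) => -[pE zE]; rewrite -pE -zE ep eqxx.
have s2_cd : [set c; d] \in walk_edges z s2.
  apply: contraTT col_pz => s2_cd; rewrite col_p -ends negbK; apply/eqP.
  apply: walk_monochrome_last => e es; apply: mono; first by rewrite mem_cat inE es !orbT.
  by apply: contraNneq s2_cd => <-.
have [s3 [z' [s4 [s2E z'z s4_cd]]]] := walk_edges_split_last s2_cd; subst s2.
move: ws2 ends mono; rewrite walk_cat walk_cons last_cat /= walk_edges_cat walk_edges_cons.
move=> /and3P [_ _ ws4] ends mono.
have z'p : z' = p.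
  apply: same_side; [by rewrite -z'z !inE eqxx orbT | exact: p_cd |].
  rewrite col_p -ends; apply/esym/walk_monochrome_last => e es; apply: mono.
    by rewrite mem_cat inE mem_cat inE es !orbT.
  by apply: contraNneq s4_cd => <-.
subst z'; exists (s1 ++ s4); rewrite walk_cat ws1 ws4 last_cat; split => //.
rewrite !wsum_cat !wsum_cons wsum_cat wsum_cons pz -/p -addnA leq_add2l addnC leq_add2l.
by rewrite addnA leq_addl.
Qed.

End Walks.

Section Connectivity.
Variable V : finType.
Implicit Types (F G : {set {set V}}) (x y : V).

(* A BFS tree: each vertex other than the root r is attached to the previous
   vertex of one of its shortest walks from r, injectively. *)
Lemma connected_card F : connected F -> #|V|.-1 <= #|F|.
Proof.
move=> conF.
case: (pickP (fun _ : V => true)) => [r _|V0]; last first.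
  by rewrite (eq_card0 (A := V)) // => x; rewrite /in_mem /= V0.
have reach v : exists n, [exists t : n.-tuple V, walk F r t && (last r t == v)].
  have [s [ws ls]] := conF r v.
  by exists (size s); apply/existsP; exists (in_tuple s); rewrite ws ls eqxx.
pose dist v := ex_minn (reach v).
have distP v : exists s, [&& walk F r s, last r s == v & size s == dist v].
  rewrite /dist; case: ex_minnP => n /existsP [t /andP [wt /eqP lt]] _.
  by exists t; rewrite size_tuple wt lt !eqxx.
have dist_min v s : walk F r s -> last r s = v -> dist v <= size s.
  move=> ws ls; rewrite /dist; case: ex_minnP => n _; apply.
  by apply/existsP; exists (in_tuple s); rewrite ws ls eqxx.
pose sp v := xchoose (distP v).
have spP v : [/\ walk F r (sp v), last r (sp v) = v & size (sp v) = dist v].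
  by have /and3P [? /eqP ? /eqP ?] := xchooseP (distP v).
pose parent v := last r (belast r (sp v)).
pose up v := [set parent v; v].
have upP v : v != r -> up v \in F /\
    exists s, [/\ walk F r s, last r s = parent v & (size s).+1 = dist v].
  move=> vr; have [] := spP v; rewrite /up /parent.
  case/lastP: (sp v) => [|s y]; first by move=> _ /= vE; rewrite vE eqxx in vr.
  rewrite belast_rcons last_rcons /walk rcons_path size_rcons => /andP [ws yF] yv sd.
  by subst y; split; last exists s.
have up_inj : {in [set~ r] &, injective up}.
  move=> v v'; rewrite !inE => vr v'r e.
  have [// | vv'] := eqVneq v v'.
  have [_ [s1 [w1 l1 d1]]] := upP v vr.
  have [_ [s2 [w2 l2 d2]]] := upP v' v'r.
  case: (eq_set2 e) => [[_ e2]|[e1 e2]]; first by rewrite e2 eqxx in vv'.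
  have := dist_min _ _ w1 l1; have := dist_min _ _ w2 l2.
  rewrite e1 -e2; lia.
rewrite -[#|V|.-1](cardsC1 r) -(card_in_imset up_inj); apply: subset_leq_card.
apply/subsetP => e /imsetP [v]; rewrite !inE => vr ->.
by case: (upP v vr).
Qed.

Lemma connected_reroute F G c d : connected F -> [set c; d] \in F ->
  (forall e, e \in F -> e != [set c; d] -> e \in G) ->
  (exists s, walk G c s /\ last c s = d) -> connected G.
Proof.
move=> conF cdF FG [sc [wsc lsc]].
have [sd [wsd lsd _ _]] := walk_rev (fun _ => 0) wsc.
rewrite lsc in wsd lsd.
move=> x y; have [s [ws ls]] := conF x y.
elim: s x ws ls => [|z s IH] x; first by move=> _ <-; exists [::].
rewrite walk_cons => /andP [xzF ws] /= ls.
have [s' [ws' ls']] := IH z ws ls.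
have [e|ne] := eqVneq [set x; z] [set c; d].
  case: (eq_set2 e) => -[-> zE]; rewrite zE in ws' ls'.
  - by exists (sc ++ s'); rewrite walk_cat last_cat wsc lsc ws'.
  - by exists (sd ++ s'); rewrite walk_cat last_cat wsd lsd ws'.
by exists (z :: s'); rewrite walk_cons FG.
Qed.

End Connectivity.

Section MinimumSpanningTree.
Variables (V : finType) (w : {set V} -> nat) (E Z : {set {set V}}).
Hypothesis simpleE : simple_graph E.
Hypothesis mstZ : unique_MST w E Z.
Implicit Types (x y : V) (s : seq V).

Lemma simple_edge e : e \in E -> exists c d, c != d /\ e = [set c; d].
Proof. by move=> /simpleE /eqP /cards2P [c [d [cd ->]]]; exists c, d. Qed.

Lemma mst_sub : Z \subset E. Proof. by case: mstZ => [[]]. Qed.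
Lemma mst_connected : connected Z. Proof. by case: mstZ => [[_ []]]. Qed.
Lemma mst_card : #|Z| = #|V|.-1. Proof. by case: mstZ => [[_ []]]. Qed.

Lemma mst_edge_neq x y : [set x; y] \in Z -> x != y.
Proof.
move=> xyZ; have := simpleE (subsetP mst_sub _ xyZ); apply/contraPneq => ->.
by rewrite setUid cards1.
Qed.

Definition cut_side (f : {set V}) (c v : V) :=
  connect (fun a b => [set a; b] \in Z :\ f) c v.

Lemma cut_sideP f c v :
  reflect (exists s, walk (Z :\ f) c s /\ last c s = v) (cut_side f c v).
Proof. by apply: (iffP connectP) => [[s ws ls]|[s [ws ls]]]; exists s. Qed.

(* Otherwise [Z :\ [set c; d]] would be connected with too few edges. *)
Lemma mst_edge_bridge c d : [set c; d] \in Z -> ~~ cut_side [set c; d] c d.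
Proof.
move=> cdZ; apply/negP => /cut_sideP walk_cd.
have conn : connected (Z :\ [set c; d]).
  by apply: (connected_reroute mst_connected cdZ _ walk_cd) => e eZ e_cd; rewrite !inE e_cd.
have := connected_card conn.
by rewrite -mst_card (cardsD1 [set c; d] Z) cdZ ltnn.
Qed.

Lemma cut_side_sym f a b : cut_side f a b = cut_side f b a.
Proof.
by apply/idP/idP => /cut_sideP [s [ws <-]]; have [s' [ws' ls' _ _]] := walk_rev w ws;
  apply/cut_sideP; exists s'.
Qed.

Lemma cut_side_edge f c a b : [set a; b] \in Z :\ f -> cut_side f c a = cut_side f c b.
Proof.
move=> abZ; have ab : cut_side f a b by apply: connect1.
have ba : cut_side f b a by rewrite cut_side_sym.
by apply/idP/idP => ca; [exact: connect_trans ca ab | exact: connect_trans ca ba].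
Qed.

Lemma cut_side_other c d v : [set c; d] \in Z ->
  ~~ cut_side [set c; d] c v -> cut_side [set c; d] d v.
Proof.
move=> cdZ cv; have [s [ws ls]] := mst_connected c v.
have avoid s' z : walk Z z s' -> [set c; d] \notin walk_edges z s' -> walk (Z :\ [set c; d]) z s'.
  move=> ws' cds'; apply: (walk_widen ws') => e es' eZ; rewrite !inE eZ andbT.
  by apply: contraNneq cds' => <-.
have [cds|] := boolP ([set c; d] \in walk_edges c s); last first.
  by move=> /(avoid _ _ ws) ws_cut; case/negP: cv; apply/cut_sideP; exists s.
have [s1 [z [s2 [sE zE zs2]]]] := walk_edges_split_last cds.
move: ws ls; rewrite sE walk_cat last_cat walk_cons => /and3P [_ _ ws2] ls.
have ws2' := avoid _ _ ws2 zs2; case: (eq_set2 zE) => -[_ zcd]; subst z.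
- by apply/cut_sideP; exists s2.
- by case/negP: cv; apply/cut_sideP; exists s2.
Qed.

(* Cut optimality of the unique MST: swapping the tree edge [set c; d] for any
   other edge across its cut gives a spanning tree, which must be heavier. *)
Lemma mst_cut_lighter c d a b : [set c; d] \in Z -> [set a; b] \in E -> [set a; b] \notin Z ->
  cut_side [set c; d] c a != cut_side [set c; d] c b -> w [set c; d] < w [set a; b].
Proof.
move=> cdZ abE abZ.
wlog [ca cb] : a b abE abZ / cut_side [set c; d] c a /\ ~~ cut_side [set c; d] c b.
  move=> gen; case ca: (cut_side _ c a); case cb: (cut_side _ c b) => // _.
  - by apply: gen; rewrite ?ca ?cb.
  - have baE : [set b; a] = [set a; b] by rewrite setUC.
    by rewrite -baE; apply: gen; rewrite ?baE ?ca ?cb.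
move=> _; set f := [set c; d]; set g := [set a; b]; set T := g |: (Z :\ f).
have [sa [wsa lsa]] := cut_sideP _ _ _ ca.
have [sb [wsb lsb]] := cut_sideP _ _ _ (cut_side_other cdZ cb).
have [sb' [wsb' lsb' _ _]] := walk_rev w wsb; rewrite lsb in wsb' lsb'.
have to_T s' z : walk (Z :\ f) z s' -> walk T z s'.
  by move=> ws'; apply: (walk_widen ws') => e _ eZ; rewrite inE eZ orbT.
have spanT : spanning_tree E T.
  split; [|split].
  - apply/subsetP => e; rewrite !inE => /orP [/eqP ->//|/andP [_ eZ]].
    exact: (subsetP mst_sub).
  - apply: (connected_reroute mst_connected cdZ).
      by move=> e eZ ef; rewrite !inE ef eZ orbT.
    exists (sa ++ b :: sb'); rewrite walk_cat last_cat /= lsa lsb' to_T //=.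
    by rewrite !inE eqxx to_T.
  - rewrite cardsU1 !inE negb_and abZ orbT /= -mst_card (cardsD1 f Z) cdZ.
    by rewrite add1n.
have TZ : T != Z by apply: contraNneq abZ => <-; rewrite !inE eqxx.
have := (proj2 mstZ) T spanT TZ.
rewrite /tweight big_setU1 /=; last by rewrite !inE negb_and abZ orbT.
by rewrite (big_setD1 f cdZ) /= ltn_add2r.
Qed.

Lemma cut_monochrome c d g : [set c; d] \in Z -> g \in E -> g != [set c; d] ->
  (g \notin Z -> w g <= w [set c; d]) -> monochrome (cut_side [set c; d] c) g.
Proof.
move=> cdZ gE g_cd light a b gab; subst g.
have [abZ|abZ] := boolP ([set a; b] \in Z).
  by apply: cut_side_edge; rewrite !inE g_cd abZ.
apply/eqP; apply: contraT => /(mst_cut_lighter cdZ gE abZ).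
by rewrite ltnNge light.
Qed.

Lemma mst_path_unique x s s' : walk Z x s -> walk Z x s' ->
  uniq (x :: s) -> uniq (x :: s') -> last x s = last x s' -> s = s'.
Proof.
elim: s x s' => [|y t IH] x [|y' t'] //=.
- by move=> _ _ _ /andP [xt' _] ls; move: xt'; rewrite ls mem_last.
- by move=> _ _ /andP [xt _] _ ls; move: xt; rewrite -ls mem_last.
move=> /andP [xyZ wt] /andP [xy'Z wt'] /andP [xt ut] /andP [xt' ut'] ls.
have [yE|yy'] := eqVneq y y'; first by subst y'; rewrite (IH y t' wt wt' ut ut' ls).
have xy := mst_edge_neq xyZ.
case/negP: (mst_edge_bridge xyZ); apply/cut_sideP.
have [t'' [wt'' lt'' _ et'']] := walk_rev w wt.
exists ((y' :: t') ++ t''); split; last by rewrite last_cat /= -ls lt''.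
rewrite walk_cat walk_cons /= -ls -andbA; apply/and3P; split.
- rewrite !inE xy'Z andbT; apply/eqP => /eq_set2 [[_ e]|[e _]].
  + by rewrite e eqxx in yy'.
  + by rewrite e eqxx in xy.
- apply: (walk_widen wt') => e es eZ; rewrite !inE eZ andbT.
  by apply: contraTneq es => ->; exact: walk_edges_notin.
- apply: (walk_widen wt'') => e es eZ; rewrite !inE eZ andbT.
  by apply: contraTneq es => ->; rewrite et''; exact: walk_edges_notin.
Qed.

End MinimumSpanningTree.

Section GreedySpanner.
Variables (R : numDomainType) (t : R) (V : finType) (w : {set V} -> nat).
Variables (E Z H : {set {set V}}) (sq : seq {set V}).
Hypothesis simpleE : simple_graph E.
Hypothesis mstZ : unique_MST w E Z.
Hypothesis w_gt0 : forall e, e \in E -> 0 < w e.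
Hypothesis greedyH : greedy_spanner w t E sq H.

Lemma spanner_sub : H \subset E. Proof. by case: greedyH. Qed.

Lemma mem_order e : (e \in sq) = (e \in E).
Proof. by case: greedyH => sqE _ _ _; rewrite (perm_mem sqE) mem_enum. Qed.

Lemma order_weight_mono e f : e \in E -> f \in E ->
  index e sq <= index f sq -> w e <= w f.
Proof.
case: greedyH => _ sorted_sq _ _ eE fE ef.
have := sorted_leq_nth (leT := fun e f => w e <= w f)
  (fun y x z => @leq_trans (w y) (w x) (w z)) (fun x => leqnn (w x)) set0 sorted_sq.
move=> /(_ (index e sq) (index f sq)); rewrite !inE !index_mem !nth_index ?mem_order //.
by apply; rewrite ?mem_order.
Qed.

Lemma order_index_inj e f : e \in E -> f \in E -> index e sq = index f sq -> e = f.
Proof. by move=> eE fE ef; rewrite -(nth_index set0 (_ : e \in sq)) ?ef ?nth_index ?mem_order. Qed.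

Definition earlier (e : {set V}) := [set f in H | index f sq < index e sq].

Lemma greedy_dist e x y : e \in H -> e = [set x; y] ->
  dist_gt w (earlier e) x y (t * (w e)%:R).
Proof.
move=> eH exy; have esq : e \in sq by rewrite mem_order (subsetP spanner_sub).
case: greedyH => _ _ _ /(_ (index e sq)); rewrite index_mem esq nth_index //.
by move=> /(_ isT) [+ _] => /(_ eH x y exy).
Qed.

(* Earlier edges are no heavier, so no earlier walk crosses the cut of a tree
   edge: the greedy test always succeeds on it. *)
Lemma mst_sub_spanner : Z \subset H.
Proof.
apply/subsetP => f fZ; have fE := subsetP (mst_sub mstZ) _ fZ.
case: greedyH => _ _ _ /(_ (index f sq)); rewrite index_mem mem_order fE.
rewrite nth_index ?mem_order // => /(_ isT) [_]; apply => c d fcd s ws ls.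
subst f; case/negP: (mst_edge_bridge mstZ fZ).
have := walk_monochrome_last (col := cut_side Z [set c; d] c) (x := c) (s := s).
rewrite ls => ->; first exact: connect0.
move=> e es.
move: ws; rewrite walkE => /allP /(_ _ es); rewrite inE => /andP [eH e_lt].
have eE := subsetP spanner_sub _ eH.
apply: (cut_monochrome mstZ fZ eE); first by apply: contraTneq e_lt => ->; rewrite ltnn.
by move=> _; apply: order_weight_mono => //; exact: ltnW.
Qed.

(* A tree edge f in the walk that is not earlier than [set u; v] is no lighter
   than it, so by cut optimality no other edge of the walk, nor [set u; v],
   crosses the cut of f. *)
Lemma earlier_shortcut u v s : [set u; v] \in E -> [set u; v] \notin Z ->
  walk (earlier [set u; v] :|: Z) u s -> last u s = v ->
  ~~ all [in earlier [set u; v]] (walk_edges u s) ->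
  exists s', [/\ walk (earlier [set u; v] :|: Z) u s', last u s' = v
               & wsum w u s' < wsum w u s].
Proof.
move=> uvE uvZ ws ls /allPn [f fs f_late].
have fFZ : f \in earlier [set u; v] :|: Z by move: ws; rewrite walkE => /allP; apply.
have fZ : f \in Z by move: fFZ; rewrite inE (negbTE f_late).
have fE := subsetP (mst_sub mstZ) _ fZ.
have uv_f : index [set u; v] sq <= index f sq.
  by move: f_late; rewrite inE (subsetP mst_sub_spanner _ fZ) -leqNgt.
have [c [d [_ fcd]]] := simple_edge simpleE fE; subst f.
set col := cut_side Z [set c; d] c.
have mono g : g \in E -> g != [set c; d] -> index g sq <= index [set u; v] sq ->
    monochrome col g.
  move=> gE g_cd g_uv; apply: (cut_monochrome mstZ fZ gE g_cd) => _.
  exact: order_weight_mono gE fE (leq_trans g_uv uv_f).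
have col_cd : col c != col d.
  by rewrite /col (negbTE (mst_edge_bridge mstZ fZ)) [cut_side _ _ _ _]connect0.
have [e es e_cd||s' [ws' ls' ss']] := walk_cut_shortcut w col_cd ws fs.
- have eFZ : e \in earlier [set u; v] :|: Z by move: ws; rewrite walkE => /allP; apply.
  have [eZ|eZ] := boolP (e \in Z).
    by apply: (cut_monochrome mstZ fZ (subsetP (mst_sub mstZ) _ eZ) e_cd); rewrite eZ.
  move: eFZ; rewrite inE (negbTE eZ) orbF inE => /andP [eH e_uv].
  exact: mono (subsetP spanner_sub _ eH) e_cd (ltnW e_uv).
- have uv_cd : [set u; v] != [set c; d] by apply: contraNneq uvZ => ->.
  by rewrite ls (mono _ uvE uv_cd (leqnn _) u v erefl).
exists s'; rewrite ws' ls' ls; split => //.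
by apply: leq_trans ss'; rewrite -addn1 leq_add2l w_gt0.
Qed.

Lemma earlier_walk u v s : [set u; v] \in E -> [set u; v] \notin Z ->
  walk (earlier [set u; v] :|: Z) u s -> last u s = v ->
  exists s', [/\ walk (earlier [set u; v]) u s', last u s' = v & wsum w u s' <= wsum w u s].
Proof.
move=> uvE uvZ; have [n] := ubnP (wsum w u s); elim: n s => // n IH s s_n ws ls.
have [early|] := boolP (all [in earlier [set u; v]] (walk_edges u s)).
  by exists s; rewrite walkE.
move=> /(earlier_shortcut uvE uvZ ws ls) [s' [ws' ls' ss']].
have [s'' [ws'' ls'' s''s']] := IH s' (leq_trans ss' s_n) ws' ls'.
by exists s''; split => //; exact: leq_trans s''s' (ltnW ss').
Qed.

Lemma greedy_detour u v s : [set u; v] \in H -> [set u; v] \notin Z ->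
  walk (earlier [set u; v] :|: Z) u s -> last u s = v ->
  (t * (w [set u; v])%:R < (wsum w u s)%:R)%R.
Proof.
move=> uvH uvZ ws ls; have uvE := subsetP spanner_sub _ uvH.
have [s' [ws' ls' s's]] := earlier_walk uvE uvZ ws ls.
by apply: (lt_le_trans (greedy_dist uvH erefl ws' ls')); rewrite ler_nat.
Qed.

End GreedySpanner.

Lemma cat_eq_prefix (T : eqType) (s1 s2 s1' s2' : seq T) :
  s1 ++ s2 = s1' ++ s2' -> size s1 <= size s1' -> s1' = s1 ++ drop (size s1) s1'.
Proof.
move=> e le_s1; have := congr1 (take (size s1)) e.
by rewrite take_size_cat // takel_cat // => {1}->; rewrite cat_take_drop.
Qed.

Section PathP.
Variables (V : finType) (w : {set V} -> nat) (E Z : {set {set V}}).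
Variables (vs : seq V) (ell : nat -> nat).
Hypothesis simpleE : simple_graph E.
Hypothesis mstZ : unique_MST w E Z.
Hypothesis size_vs : size vs = #|V|.
Hypothesis ell_step : forall j x0, j.+1 < #|V| ->
  exists2 d, tree_dist w Z (nth x0 vs j) (nth x0 vs j.+1) d & ell j.+1 = ell j + d.

Definition tree_reach (u u' : V) (n : nat) :=
  exists s, [/\ walk Z u s, last u s = u' & wsum w u s <= n].

Lemma tree_reach_sym u u' n : tree_reach u u' n -> tree_reach u' u n.
Proof.
case=> s [ws <- sn]; have [s' [ws' ls' wss' _]] := walk_rev w ws.
by exists s'; rewrite wss'.
Qed.

(* Uniqueness of simple Z-paths identifies the path through p_x with the one
   whose weight is ell (j+1) - ell j, which gives the distance to v_(j+1). *)
Lemma on_P_split x0 u x : on_P w Z vs ell u x -> exists j s1 s2,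
  [/\ j.+1 < #|V|, ell j <= x <= ell j.+1,
      walk Z (nth x0 vs j) (s1 ++ s2) /\ uniq (nth x0 vs j :: s1 ++ s2),
      last (nth x0 vs j) s1 = u /\ last u s2 = nth x0 vs j.+1 &
      wsum w (nth x0 vs j) s1 = x - ell j /\ wsum w u s2 = ell j.+1 - x].
Proof.
move=> [j [j_lt x_in [s1 [s2 [[ws1 ls1] [ws2 ls2] us ws1x]]]]].
rewrite (set_nth_default x0 u (ltnW j_lt)) (set_nth_default x0 u j_lt) in ws1 ls1 ls2 us ws1x.
rewrite size_vs in j_lt.
have [d [sj [wsj lsj usj wsjd]] ell_j] := ell_step x0 j_lt.
have ws : walk Z (nth x0 vs j) (s1 ++ s2) by rewrite walk_cat ws1 ls1.
have sjE : s1 ++ s2 = sj.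
  by apply: (mst_path_unique simpleE mstZ ws wsj us usj); rewrite last_cat ls1 ls2 lsj.
exists j, s1, s2; split => //; split => //.
by move: wsjd x_in; rewrite -sjE wsum_cat ls1 ws1x ell_j; lia.
Qed.

Lemma traversal_walk x0 j k : j + k < #|V| -> exists s,
  [/\ walk Z (nth x0 vs j) s, last (nth x0 vs j) s = nth x0 vs (j + k),
      wsum w (nth x0 vs j) s = ell (j + k) - ell j & ell j <= ell (j + k)].
Proof.
elim: k => [|k IH] jk; first by exists [::]; rewrite addn0 subnn wsum_nil.
rewrite addnS in jk.
have [s [ws ls wss ell_le]] := IH (ltnW jk).
have [d [sj [wsj lsj _ wsjd]] ell_j] := ell_step x0 jk.
exists (s ++ sj); rewrite walk_cat last_cat ls ws wsj lsj wsum_cat wss ls wsjd addnS.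
by split => //; move: ell_le; rewrite ell_j; lia.
Qed.

Lemma tree_reach_cross x0 j j' u x u' x' s2 s1' : j < j' -> j'.+1 < #|V| ->
  x <= ell j.+1 -> ell j' <= x' ->
  walk Z u s2 -> last u s2 = nth x0 vs j.+1 -> wsum w u s2 = ell j.+1 - x ->
  walk Z (nth x0 vs j') s1' -> last (nth x0 vs j') s1' = u' ->
  wsum w (nth x0 vs j') s1' = x' - ell j' ->
  tree_reach u u' `|x - x'|.
Proof.
move=> jj' j'_lt x_le le_x' ws2 ls2 wss2 ws1' ls1' wss1'.
have [k j'E] : exists k, j' = j.+1 + k by exists (j' - j.+1); rewrite subnKC.
subst j'; have [s [ws ls wss ell_le]] := traversal_walk x0 (ltnW j'_lt).
exists (s2 ++ s ++ s1'); rewrite !walk_cat !last_cat ws2 ls2 ws ls ws1' ls1'.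
by rewrite !wsum_cat ls2 ls wss2 wss wss1'; split => //; lia.
Qed.

Lemma tree_reach_same x0 j u x u' x' s1 s2 s1' s2' :
  walk Z (nth x0 vs j) (s1 ++ s2) -> uniq (nth x0 vs j :: s1 ++ s2) ->
  last (nth x0 vs j) s1 = u -> last u s2 = nth x0 vs j.+1 ->
  walk Z (nth x0 vs j) (s1' ++ s2') -> uniq (nth x0 vs j :: s1' ++ s2') ->
  last (nth x0 vs j) s1' = u' -> last u' s2' = nth x0 vs j.+1 ->
  wsum w (nth x0 vs j) s1 = x - ell j -> wsum w (nth x0 vs j) s1' = x' - ell j ->
  ell j <= x -> ell j <= x' -> tree_reach u u' `|x - x'|.
Proof.
move=> ws us ls1 ls2 ws' us' ls1' ls2' wss1 wss1' xl xl'.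
have sE : s1 ++ s2 = s1' ++ s2'.
  by apply: (mst_path_unique simpleE mstZ ws ws' us us'); rewrite !last_cat ls1 ls2 ls1' ls2'.
have [le|lt] := leqP (size s1) (size s1').
- move: ws' ls1' wss1'; rewrite (cat_eq_prefix sE le) walk_cat last_cat wsum_cat ls1 wss1.
  rewrite walk_cat ls1 => /andP [/andP [_ wsd] _] lsd wssd.
  by exists (drop (size s1) s1'); split => //; move: wssd; set a := wsum _ _ _; lia.
- apply: tree_reach_sym.
  move: ws ls1 wss1; rewrite (cat_eq_prefix (esym sE) (ltnW lt)) walk_cat last_cat wsum_cat.
  rewrite ls1' wss1' walk_cat ls1' => /andP [/andP [_ wsd] _] lsd wssd.
  by exists (drop (size s1') s1); split => //; move: wssd; set a := wsum _ _ _; lia.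
Qed.

Lemma on_P_reach u x u' x' : on_P w Z vs ell u x -> on_P w Z vs ell u' x' ->
  tree_reach u u' `|x - x'|.
Proof.
move=> /(on_P_split u) [j [s1 [s2 [j_lt /andP [xl xr] [ws us] [ls1 ls2] [ws1 ws2]]]]].
move=> /(on_P_split u) [j' [s1' [s2' [j'_lt /andP [xl' xr'] [ws' us'] [ls1' ls2'] [ws1' ws2']]]]].
move: (ws) (ws'); rewrite !walk_cat ls1 ls1' => /andP [wsa wsb] /andP [wsa' wsb'].
have [jj'|j'j|jE] := ltngtP j j'.
- exact: (tree_reach_cross jj' j'_lt xr xl' wsb ls2 ws2 wsa' ls1' ws1').
- rewrite distnC; apply: tree_reach_sym.
  exact: (tree_reach_cross j'j j_lt xr' xl wsb' ls2' ws2' wsa ls1 ws1).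
- subst j'; exact: (tree_reach_same ws us ls1 ls2 ws' us' ls1' ls2' ws1 ws1' xl xl').
Qed.

Lemma in_I_reach m h h' B u u' :
  in_I w Z vs ell m h u -> in_I w Z vs ell m h' u' -> 0 < h -> 0 < h' ->
  h <= h' + B -> h' <= h + B -> tree_reach u u' ((B + 1) * m).
Proof.
move=> [x [/andP [xl xr] ux]] [x' [/andP [xl' xr'] ux']] h_gt0 h'_gt0 hh' h'h.
have [s [ws ls le_s]] := on_P_reach ux ux'; exists s; split => //.
apply: leq_trans le_s _.
have hm : h.-1 * m + m = h * m by rewrite -mulSnr prednK.
have h'm : h'.-1 * m + m = h' * m by rewrite -mulSnr prednK.
have : h * m <= h' * m + B * m by rewrite -mulnDl leq_mul2r hh' orbT.
have : h' * m <= h * m + B * m by rewrite -mulnDl leq_mul2r h'h orbT.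
rewrite mulnDl mul1n; lia.
Qed.

End PathP.

Lemma floor_div_nat (R : archiRealFieldType) (a : R) (n : nat) : (0 < a)%R ->
  exists b : nat, Num.floor (n%:R / a) = Posz b /\ (b%:R * a <= n%:R)%R.
Proof.
move=> a_gt0; have : (0 <= Num.floor (n%:R / a))%R.
  by rewrite floor_ge0 divr_ge0 // ltW.
have := floor_le (n%:R / a); case: (Num.floor _) => // b b_le _.
by exists b; split => //; rewrite -ler_pdivlMr.
Qed.

Lemma Nb_close s (b b' : nat) q h h' : Nb s b h q -> Nb s b' h' q ->
  h <= h' + (b + b') /\ h' <= h + (b + b').
Proof. by move=> /andP [_ qh] /andP [_ qh']; lia. Qed.

(* The detour has weight at most eps (b a + b' a + a) / 4 + w e <= 3 (1 + eps) w e'. *)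
Lemma detour_budget (R : realFieldType) (t eps a m b b' we we' : R) :
  (0 < eps)%R -> (3 * (1 + eps) <= t)%R -> m = (eps * a / 8)%R ->
  (b * a <= we)%R -> (b' * a <= we')%R -> (a <= we')%R -> (0 <= we)%R -> (we <= we')%R ->
  (2 * ((b + b' + 1) * m) + we <= t * we')%R.
Proof.
move=> eps_gt0 t_ge -> ba b'a a_le we_ge0 we_le.
have -> : (2 * ((b + b' + 1) * (eps * a / 8)) = eps * (b * a + b' * a + a) / 4)%R.
  by field.
have : (eps * (b * a + b' * a + a) <= 3 * (eps * we'))%R.
  by rewrite mulrCA ler_pM2l //; lra.
have : (3 * we' + 3 * (eps * we') <= t * we')%R.
  have -> : (3 * we' + 3 * (eps * we') = 3 * (1 + eps) * we')%R by ring.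
  by rewrite ler_wpM2r //; lra.
have : (0 <= eps * we')%R by rewrite mulr_ge0 //; lra.
move: (eps * (b * a + b' * a + a))%R (eps * we')%R (t * we')%R => X Q T; lra.
Qed.

Section NoParallelEdges.
Variables (R : realFieldType) (t eps a : R) (V : finType) (w : {set V} -> nat).
Variables (E Z H : {set {set V}}) (sq : seq {set V}) (vs : seq V) (ell : nat -> nat).
Variables (s m : nat).
Hypothesis simpleE : simple_graph E.
Hypothesis mstZ : unique_MST w E Z.
Hypothesis w_gt0 : forall e, e \in E -> 0 < w e.
Hypothesis greedyH : greedy_spanner w t E sq H.
Hypothesis size_vs : size vs = #|V|.
Hypothesis ell_step : forall j x0, j.+1 < #|V| ->
  exists2 d, tree_dist w Z (nth x0 vs j) (nth x0 vs j.+1) d & ell j.+1 = ell j + d.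
Hypothesis eps_gt0 : (0 < eps)%R.
Hypothesis t_ge : (3 * (1 + eps) <= t)%R.
Hypothesis m_def : (m%:R = eps * a / 8)%R.

(* Sharing (q, q') puts u' within (b + b' + 1) m of u and v within that of v'
   in Z, so the greedy test on the later edge e' = {u', v'} sees the walk
   u' ~> u -> v ~> v' of weight at most 2 (b + b' + 1) m + w e <= t w e'. *)
Lemma no_common_matched_pair e e' u v u' v' h j h' j' b b' q q' :
  e = [set u; v] -> e' = [set u'; v'] -> e \in H -> e' \in H -> e' \notin Z ->
  index e sq < index e' sq -> (a <= (w e')%:R)%R ->
  (b%:R * a <= (w e)%:R)%R -> (b'%:R * a <= (w e')%:R)%R ->
  let I := in_I w Z vs ell m in I h u -> I j v -> I h' u' -> I j' v' ->
  0 < h -> 0 < j -> 0 < h' -> 0 < j' ->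
  Nb s b h q -> Nb s b j q' -> Nb s b' h' q -> Nb s b' j' q' -> False.
Proof.
move=> euv e'uv eH e'H e'Z ee' a_le be b'e' I Iu Iv Iu' Iv' h_gt0 j_gt0 h'_gt0 j'_gt0.
move=> /Nb_close hq /Nb_close jq /hq [hh' h'h] /jq [jj' j'j].
have [su [wsu lsu su_le]] := in_I_reach simpleE mstZ size_vs ell_step Iu' Iu h'_gt0 h_gt0 h'h hh'.
have [sv [wsv lsv sv_le]] := in_I_reach simpleE mstZ size_vs ell_step Iv Iv' j_gt0 j'_gt0 jj' j'j.
subst e e'; have uvE := subsetP (spanner_sub greedyH) _ eH.
have u'v'E := subsetP (spanner_sub greedyH) _ e'H.
have to_early x s0 : walk Z x s0 -> walk (earlier H sq [set u'; v'] :|: Z) x s0.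
  by move=> ws0; apply: (walk_widen ws0) => f _ fZ; rewrite inE fZ orbT.
have wd : walk (earlier H sq [set u'; v'] :|: Z) u' (su ++ v :: sv).
  by rewrite walk_cat walk_cons lsu !to_early // !inE eH ee'.
have ld : last u' (su ++ v :: sv) = v' by rewrite last_cat lsu.
have := greedy_detour simpleE mstZ w_gt0 greedyH e'H e'Z wd ld.
apply/negP; rewrite -leNgt; apply: le_trans (detour_budget eps_gt0 t_ge m_def be b'e' a_le
  (ler0n _ _) _); last by rewrite ler_nat (order_weight_mono greedyH uvE u'v'E (ltnW ee')).
have : wsum w u' (su ++ v :: sv) <= 2 * ((b + b' + 1) * m) + w [set u; v].
  by rewrite wsum_cat wsum_cons lsu addnCA addnC leq_add2r mul2n -addnn leq_add.
by rewrite -(ler_nat R) => /le_trans; apply; rewrite natrD !natrM !natrD.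
Qed.

End NoParallelEdges.

Theorem proposition2
  (R : archiRealFieldType) (V : finType) (E : {set {set V}}) (w : {set V} -> nat)
  (Z : {set {set V}}) (k : nat) (eps : R)
  (sq : seq {set V}) (H : {set {set V}})
  (vs : seq V) (ell : nat -> nat) (i s m : nat)
  (orient : {set V} -> V * V) (hI jI : {set V} -> nat)
  (M : {set V} -> seq (nat * nat)) :
  simple_graph E -> connected E ->
  (forall e, e \in E -> 0 < w e) ->
  unique_MST w E Z ->
  2 <= k -> (0 < eps)%R ->
  greedy_spanner w (((2 * k - 1)%:R * (1 + eps))%R) E sq H ->
  preorder Z vs ->
  ell 0 = 0 ->
  (forall j x0, j.+1 < #|V| ->
     exists2 d, tree_dist w Z (nth x0 vs j) (nth x0 vs j.+1) d & ell j.+1 = ell j + d) ->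
  let L := ell (#|V|.-1) in
  1 <= i <= up_log k #|V| ->
  let a : R := ((k ^ i.-1)%:R * L%:R / #|V|%:R)%R in
  (s%:R = 8 * L%:R / (eps * a))%R ->
  (m%:R = eps * a / 8)%R ->
  let Ei := [set e in H :\: Z | (a < (w e)%:R <= k%:R * a)%R] in
  (forall e, e \in Ei ->
     let b := Num.floor ((w e)%:R / a)%R in
     [/\ e = [set (orient e).1; (orient e).2],
         1 <= hI e <= s, 1 <= jI e <= s,
         in_I w Z vs ell m (hI e) (orient e).1 /\
         in_I w Z vs ell m (jI e) (orient e).2 &
         maximal_matching (Nb s b (hI e)) (Nb s b (jI e)) (M e)]) ->
  forall e e', e \in Ei -> e' \in Ei -> e != e' ->
  forall p p', p \in M e -> p' \in M e' ->
    ~ ((p.1 = p'.1 /\ p.2 = p'.2) \/ (p.1 = p'.2 /\ p.2 = p'.1)).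
Proof.
move=> simpleE _ w_gt0 mstZ k_ge2 eps_gt0 greedyH [_ size_vs _] _ ell_step L _ a _ m_def Ei.
move=> rep e e' eEi e'Ei ee' p p' pM p'M.
have EiP f : f \in Ei -> [/\ f \in H, f \notin Z, (a < (w f)%:R)%R & ((w f)%:R <= k%:R * a)%R].
  by rewrite !inE => /andP [/andP [-> ->] /andP [-> ->]].
have t_ge : (3 * (1 + eps) <= (2 * k - 1)%:R * (1 + eps))%R.
  by rewrite ler_wpM2r ?ler_nat; try lra; lia.
have a_gt0 : (0 < a)%R.
  have [/(subsetP (spanner_sub greedyH)) /w_gt0 we_gt0 _ _ we_le] := EiP e eEi.
  by rewrite -(pmulr_rgt0 _ (_ : 0 < k%:R)%R) ?ltr0n ?(lt_le_trans _ we_le) ?ltr0n //; lia.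
wlog lt_ee' : e e' p p' eEi e'Ei ee' pM p'M / index e sq < index e' sq.
  move=> gen; have H_E := subsetP (spanner_sub greedyH).
  have [[eH _ _ _] [e'H _ _ _]] := (EiP e eEi, EiP e' e'Ei).
  case: (ltngtP (index e sq) (index e' sq)) => [lt|gt|eq]; first exact: (gen e e' p p').
  - move=> shared; apply: (gen e' e p' p) => //; first by rewrite eq_sym.
    by case: shared => -[-> ->]; [left|right].
  - by rewrite (order_index_inj greedyH (H_E _ eH) (H_E _ e'H) eq) eqxx in ee'.
have [eH _ _ _] := EiP e eEi; have [e'H e'Z a_lt _] := EiP e' e'Ei.
have [b [eb be]] := floor_div_nat (w e) a_gt0.
have [b' [e'b b'e']] := floor_div_nat (w e') a_gt0.
have [euv /andP [h_gt0 _] /andP [j_gt0 _] [Iu Iv] [[_ inM _] _]] := rep e eEi.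
have [e'uv /andP [h'_gt0 _] /andP [j'_gt0 _] [Iu' Iv'] [[_ inM' _] _]] := rep e' e'Ei.
have [Nh Nj _] := inM p pM; have [Nh' Nj' _] := inM' p' p'M.
rewrite /= eb in Nh Nj; rewrite /= e'b in Nh' Nj'.
have no_pair := no_common_matched_pair simpleE mstZ w_gt0 greedyH size_vs ell_step eps_gt0
  t_ge m_def euv _ eH e'H e'Z lt_ee' (ltW a_lt) be b'e' Iu Iv.
case=> -[q1 q2]; rewrite -q1 -q2 in Nh' Nj'.
- exact: no_pair e'uv Iu' Iv' h_gt0 j_gt0 h'_gt0 j'_gt0 Nh Nj Nh' Nj'.
- by apply: no_pair Iv' Iu' h_gt0 j_gt0 j'_gt0 h'_gt0 Nh Nj Nj' Nh'; rewrite setUC.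
Qed.
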